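(* Let $\chi:\mathbb{R}\to\mathbb{R}$ be a kernel satisfying $(\chi_1)$ and $(\chi_2)$, and let $f\in AC(\mathbb{R})$. Then for every $w>0$, every $m\in\mathbb{N}$ with $m\ge1$, and every $t\in\mathbb{R}$, $$(\bar S^m_w f)'(t)=\frac1m\sum_{i=1}^m (K_w f')\left(t-\frac{m-2(i-1)}{2w}\right).$$
   Context: For $f:\mathbb{R}\to\mathbb{R}$, $V[f]$ denotes the Jordan variation of $f$ over $\mathbb{R}$ (supremum over compact intervals $[a,b]$ of the supremum over partitions $a=x_0<\dots<x_n=b$ of $\sum_i|f(x_i)-f(x_{i-1})|$); $BV(\mathbb{R})=\{f: V[f]<\infty\}$; $AC(\mathbb{R}):=BV(\mathbb{R})\cap AC_{loc}(\mathbb{R})$, where $AC_{loc}(\mathbb{R})$ is the set of functions absolutely continuous on every compact interval. A kernel $\chi:\mathbb{R}\to\mathbb{R}$ satisfies: $(\chi_1)$ $\chi\in L^1(\mathbb{R})$ is continuous and $\sum_{k\in\mathbb{Z}}\chi(u-k)=1$ for all $u\in\mathbb{R}$; $(\chi_2)$ $\sup_{u\in\mathbb{R}}\sum_{k\in\mathbb{Z}}|\chi(u-k)|<+\infty$, the series converging uniformly on compact sets. The averaged kernel is $\bar\chi_m(t):=\frac1m\int_{-m/2}^{m/2}\chi(t+v)\,dv$, and $(\bar S^m_w f)(t):=\sum_{k\in\mathbb{Z}} f(k/w)\,\bar\chi_m(wt-k)$, $t\in\mathbb{R}$, $w>0$. The sampling Kantorovich operators based on $\chi$ are $(K_w g)(t):=\sum_{k\in\mathbb{Z}}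 w\left(\int_{k/w}^{(k+1)/w} g(u)\,du\right)\chi(wt-k)$, $t\in\mathbb{R}$, $w>0$, for locally integrable $g$. *)

From Stdlib Require Import Reals Lra Lia ZArith Classical ClassicalEpsilon.
Open Scope R_scope.

Fixpoint rsum (a : nat -> R) (n : nat) : R :=
  match n with O => 0 | S n' => rsum a n' + a n' end.

(* symmetric partial sum  sum_{k=-N}^{N} a k *)
Definition zpart (a : Z -> R) (N : nat) : R :=
  rsum (fun i => a (Z.of_nat i - Z.of_nat N)%Z) (2 * N + 1).

Definition has_zsum (a : Z -> R) (l : R) : Prop := Un_cv (zpart a) l.

Definition zsum (a : Z -> R) : R :=
  epsilon (inhabits 0) (fun l => has_zsum a l).

(* ---------- Integral on [a,b] (Henstock-Kurzweil / gauge integral;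
   it extends the Lebesgue integral on compact intervals) ---------- *)
Definition is_gauge_integral (f : R -> R) (a b I : R) : Prop :=
  a <= b /\
  forall eps, 0 < eps ->
  exists delta : R -> R, (forall x, 0 < delta x) /\
    forall (n : nat) (x tg : nat -> R),
      x 0%nat = a -> x n = b ->
      (forall i, (i < n)%nat -> x i <= tg i <= x (S i)) ->
      (forall i, (i < n)%nat ->
          tg i - delta (tg i) < x i /\ x (S i) < tg i + delta (tg i)) ->
      Rabs (rsum (fun i => f (tg i) * (x (S i) - x i)) n - I) < eps.

Definition gint (f : R -> R) (a b : R) : R :=
  epsilon (inhabits 0) (fun I => is_gauge_integral f a b I).

(* chi in L^1(R), for continuous chi: sup of integrals of |chi| on compacts *)
Definition L1_cont (chi : R -> R) : Prop :=
  exists M, forall a b, a <= b ->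
    exists I, is_gauge_integral (fun x => Rabs (chi x)) a b I /\ I <= M.

Definition BV (f : R -> R) : Prop :=
  exists M, forall (n : nat) (x : nat -> R),
    (forall i, (i < n)%nat -> x i < x (S i)) ->
    rsum (fun i => Rabs (f (x (S i)) - f (x i))) n <= M.

Definition AC_loc (f : R -> R) : Prop :=
  forall a b, a <= b -> forall eps, 0 < eps ->
  exists delta, 0 < delta /\
    forall (n : nat) (aa bb : nat -> R),
      (forall i, (i < n)%nat -> a <= aa i /\ aa i <= bb i /\ bb i <= b) ->
      (forall i, (S i < n)%nat -> bb i <= aa (S i)) ->
      rsum (fun i => bb i - aa i) n < delta ->
      rsum (fun i => Rabs (f (bb i) - f (aa i))) n < eps.

Definition AC (f : R -> R) : Prop := BV f /\ AC_loc f.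

Definition null_set (E : R -> Prop) : Prop :=
  forall eps, 0 < eps ->
  exists a b : nat -> R,
    (forall n, a n <= b n) /\
    (forall x, E x -> exists n, a n < x < b n) /\
    (forall N, rsum (fun n => b n - a n) N <= eps).

Definition ae_derivative (f g : R -> R) : Prop :=
  exists E, null_set E /\ forall x, ~ E x -> derivable_pt_lim f x (g x).

Definition chi1 (chi : R -> R) : Prop :=
  continuity chi /\ L1_cont chi /\
  forall u, has_zsum (fun k => chi (u - IZR k)) 1.

Definition chi2 (chi : R -> R) : Prop :=
  (exists M, forall u N, zpart (fun k => Rabs (chi (u - IZR k))) N <= M) /\
  (* uniform convergence on compact sets (uniform Cauchy criterion) *)
  (forall a b eps, 0 < eps -> exists N0, forall N1 N2 u,
      (N0 <= N1)%nat -> (N0 <= N2)%nat -> a <= u <= b ->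
      Rabs (zpart (fun k => Rabs (chi (u - IZR k))) N1
            - zpart (fun k => Rabs (chi (u - IZR k))) N2) < eps).

Definition chibar (chi : R -> R) (m : nat) (t : R) : R :=
  / INR m * gint (fun v => chi (t + v)) (- (INR m) / 2) (INR m / 2).

Definition Sbar (chi : R -> R) (m : nat) (w : R) (f : R -> R) (t : R) : R :=
  zsum (fun k => f (IZR k / w) * chibar chi m (w * t - IZR k)).

Definition Kw (chi : R -> R) (w : R) (g : R -> R) (t : R) : R :=
  zsum (fun k => w * gint g (IZR k / w) ((IZR k + 1) / w) * chi (w * t - IZR k)).

From Stdlib Require Import Reals Lra Lia ZArith Classical ClassicalEpsilon.
From Coquelicot Require Coquelicot.
Open Scope R_scope.

(* Since chi is continuous it has an antiderivative Phi, and
   chibar_m(u) = (Phi(u + m/2) - Phi(u - m/2)) / m.  Hence the partial sums of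
   Sbar^m_w f are differences of the functions W_N(u) = sum_{|k|<=N} f(k/w) Phi(u - k),
   whose derivatives are the partial sums of L(u) = sum_k f(k/w) chi(u - k).  By (chi_2)
   and the boundedness of f these converge locally uniformly, so that
   (Sbar^m_w f)'(t) = (w/m) (L(wt + m/2) - L(wt - m/2)).
   On the other side, f is absolutely continuous, so the gauge integral of f' over
   [k/w, (k+1)/w] is f((k+1)/w) - f(k/w), and summation by parts gives
   (K_w f')(s) = w (L(ws + 1) - L(ws)).  The sum over i then telescopes. *)

Lemma rsum_ext a b n : (forall i, (i < n)%nat -> a i = b i) -> rsum a n = rsum b n.
Proof.
  induction n as [|n IH]; intros H; simpl; auto.
  rewrite IH by (intros; apply H; lia). rewrite H by lia. reflexivity.
Qed.

Lemma rsum_eq0 a n : (forall i, (i < n)%nat -> a i = 0) -> rsum a n = 0.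
Proof.
  intros H. rewrite (rsum_ext a (fun _ => 0)) by exact H.
  clear H. induction n as [|n IH]; simpl; [|rewrite IH]; lra.
Qed.

Lemma rsum_plus a b n : rsum (fun i => a i + b i) n = rsum a n + rsum b n.
Proof. induction n; simpl; lra. Qed.

Lemma rsum_minus a b n : rsum (fun i => a i - b i) n = rsum a n - rsum b n.
Proof. induction n; simpl; lra. Qed.

Lemma rsum_scal r a n : rsum (fun i => r * a i) n = r * rsum a n.
Proof. induction n; simpl; [|rewrite IHn]; lra. Qed.

Lemma rsum_le a b n : (forall i, (i < n)%nat -> a i <= b i) -> rsum a n <= rsum b n.
Proof.
  induction n as [|n IH]; intros H; simpl; [lra|].
  assert (a n <= b n) by (apply H; lia).
  assert (rsum a n <= rsum b n) by (apply IH; intros; apply H; lia).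
  lra.
Qed.

Lemma Rabs_rsum_le a n : Rabs (rsum a n) <= rsum (fun i => Rabs (a i)) n.
Proof.
  induction n; simpl; [rewrite Rabs_R0; lra|].
  eapply Rle_trans; [apply Rabs_triang | lra].
Qed.

Lemma rsum_shift a n : rsum a (S n) = a O + rsum (fun i => a (S i)) n.
Proof. induction n; simpl in *; lra. Qed.

Lemma rsum_telescope a n : rsum (fun i => a (S i) - a i) n = a n - a O.
Proof. induction n; simpl; lra. Qed.

Lemma fin_bound (u : nat -> nat) n : exists N, forall i, (i < n)%nat -> (u i < N)%nat.
Proof.
  induction n as [|n [N HN]]; [exists O; lia|].
  exists (Nat.max N (S (u n))). intros i Hi.
  destruct (Nat.eq_dec i n); [subst; lia|]. specialize (HN i ltac:(lia)). lia.
Qed.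

Lemma zpart_S a N : zpart a (S N) = zpart a N + a (Z.of_nat (S N)) + a (- Z.of_nat (S N))%Z.
Proof.
  unfold zpart. replace (2 * S N + 1)%nat with (S (S (2 * N + 1))) by lia.
  change (rsum ?b (S (S ?n))) with (rsum b (S n) + b (S n)).
  rewrite rsum_shift.
  rewrite (rsum_ext _ (fun i => a (Z.of_nat i - Z.of_nat N)%Z)) by (intros; f_equal; lia).
  replace (Z.of_nat (S (2 * N + 1)) - Z.of_nat (S N))%Z with (Z.of_nat (S N)) by lia.
  replace (Z.of_nat 0 - Z.of_nat (S N))%Z with (- Z.of_nat (S N))%Z by lia.
  lra.
Qed.

Lemma zpart_ext a b N : (forall k, a k = b k) -> zpart a N = zpart b N.
Proof. intros H. apply rsum_ext. intros; apply H. Qed.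

Lemma zpart_minus a b N : zpart (fun k => a k - b k) N = zpart a N - zpart b N.
Proof. apply rsum_minus. Qed.

Lemma zpart_scal r a N : zpart (fun k => r * a k) N = r * zpart a N.
Proof. apply rsum_scal. Qed.

Lemma Rabs_zpart_sub_le a b N1 N2 : (forall k, Rabs (a k) <= b k) -> (N1 <= N2)%nat ->
  Rabs (zpart a N2 - zpart a N1) <= zpart b N2 - zpart b N1.
Proof.
  intros Hab Hle. replace N2 with (N1 + (N2 - N1))%nat by lia.
  induction (N2 - N1)%nat as [|d IH].
  - rewrite Nat.add_0_r, !Rminus_diag, Rabs_R0. lra.
  - rewrite Nat.add_succ_r, !zpart_S.
    set (p := a (Z.of_nat (S (N1 + d)))). set (q := a (- Z.of_nat (S (N1 + d)))%Z).
    assert (Hp : Rabs p <= b (Z.of_nat (S (N1 + d)))) by apply Hab.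
    assert (Hq : Rabs q <= b (- Z.of_nat (S (N1 + d)))%Z) by apply Hab.
    replace (zpart a (N1 + d) + p + q - zpart a N1)
      with (zpart a (N1 + d) - zpart a N1 + (p + q)) by ring.
    pose proof (Rabs_triang (zpart a (N1 + d) - zpart a N1) (p + q)).
    pose proof (Rabs_triang p q).
    lra.
Qed.

Lemma zpart_by_parts (c : Z -> R) (chi : R -> R) x N :
  zpart (fun k => (c (k + 1)%Z - c k) * chi (x - IZR k)) N =
  zpart (fun k => c k * chi (x + 1 - IZR k)) N - zpart (fun k => c k * chi (x - IZR k)) N
  + (c (Z.of_nat N + 1)%Z * chi (x - INR N) - c (- Z.of_nat N)%Z * chi (x + INR N + 1)).
Proof.
  induction N as [|N IH].
  - unfold zpart. simpl. rewrite !Rminus_0_r, !Rplus_0_r. ring.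
  - rewrite !zpart_S, IH, opp_IZR, <- INR_IZR_INZ, S_INR.
    replace (- Z.of_nat (S N) + 1)%Z with (- Z.of_nat N)%Z by lia.
    replace (Z.of_nat N + 1)%Z with (Z.of_nat (S N)) by lia.
    replace (x - - (INR N + 1)) with (x + INR N + 1) by ring.
    replace (x + 1 - (INR N + 1)) with (x - INR N) by ring.
    replace (x + 1 - - (INR N + 1)) with (x + (INR N + 1) + 1) by ring.
    rewrite <- S_INR. ring.
Qed.

Lemma zsum_unique a l : has_zsum a l -> zsum a = l.
Proof.
  intros H. apply (UL_sequence (zpart a)); [|exact H].
  apply (epsilon_spec (inhabits 0) (fun l => has_zsum a l)). exists l; exact H.
Qed.

Definition fine (d : R -> R) n (x tg : nat -> R) :=
  (forall i, (i < n)%nat -> x i <= tg i <= x (S i)) /\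
  (forall i, (i < n)%nat -> tg i - d (tg i) < x i /\ x (S i) < tg i + d (tg i)).

Lemma fine_mono d d' n x tg : (forall y, d y <= d' y) -> fine d n x tg -> fine d' n x tg.
Proof.
  intros Hd [F1 F2]. split; auto.
  intros i Hi. specialize (Hd (tg i)). destruct (F2 i Hi). lra.
Qed.

Lemma fine_increasing d n x tg : fine d n x tg -> forall i j, (i <= j <= n)%nat -> x i <= x j.
Proof.
  intros [F1 _] i j Hij. induction j as [|j IH]; [replace i with O by lia; lra|].
  destruct (Nat.eq_dec i (S j)); [subst; lra|].
  specialize (IH ltac:(lia)). specialize (F1 j ltac:(lia)). lra.
Qed.

Lemma fine_snoc d n x tg a y z s : x O = a -> x n = y -> fine d n x tg ->
  y <= s <= z -> s - d s < y -> z < s + d s ->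
  exists x' tg', x' O = a /\ x' (S n) = z /\ fine d (S n) x' tg'.
Proof.
  intros H0 Hn [F1 F2] Hs Hl Hr.
  exists (fun i => if Nat.leb i n then x i else z), (fun i => if Nat.ltb i n then tg i else s).
  split; [simpl; auto|]. split; [destruct (Nat.leb_spec (S n) n); [lia|auto]|].
  split; intros i Hi;
    destruct (Nat.leb_spec i n), (Nat.leb_spec (S i) n), (Nat.ltb_spec i n); try lia;
    try (apply F1 || apply F2; lia);
    replace i with n by lia; rewrite Hn; lra.
Qed.

Lemma cousin a b d : a <= b -> (forall x, 0 < d x) ->
  exists n x tg, x O = a /\ x n = b /\ fine d n x tg.
Proof.
  intros Hab Hd.
  set (P := fun y => a <= y <= b /\ exists n x tg, x O = a /\ x n = y /\ fine d n x tg).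
  assert (Pa : P a).
  { split; [lra|]. exists O, (fun _ => a), (fun _ => a). repeat split; intros; lia. }
  destruct (completeness P) as [s [Hub Hlub]].
  { exists b. intros y [Hy _]. lra. }
  { exists a; auto. }
  assert (Has : a <= s) by (apply Hub; auto).
  assert (Hsb : s <= b) by (apply Hlub; intros y [Hy _]; lra).
  assert (Hnear : exists y, P y /\ s - d s < y).
  { apply NNPP. intro Hn. assert (s <= s - d s); [|specialize (Hd s); lra].
    apply Hlub. intros y Hy. apply Rnot_lt_le. intro Hc. apply Hn. exists y; auto. }
  destruct Hnear as [y [[Hy [n [x [tg [H0 [Hn Hf]]]]]] Hys]].
  assert (Hyle : y <= s) by (apply Hub; split; [lra|exists n, x, tg; auto]).
  set (z := Rmin b (s + d s / 2)).
  assert (Hz : s <= z < s + d s) by (specialize (Hd s); unfold z, Rmin; destruct Rle_dec; lra).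
  destruct (fine_snoc d n x tg a y z s H0 Hn Hf) as [x' [tg' [H0' [Hn' Hf']]]]; try lra.
  assert (Pz : P z).
  { split; [unfold z, Rmin in *; destruct Rle_dec; lra|]. exists (S n), x', tg'. auto. }
  assert (z <= s) by (apply Hub; auto).
  replace b with z by (unfold z, Rmin in *; destruct Rle_dec; lra).
  exists (S n), x', tg'. auto.
Qed.

Lemma gauge_integral_unique h a b I1 I2 :
  is_gauge_integral h a b I1 -> is_gauge_integral h a b I2 -> I1 = I2.
Proof.
  intros [Hab H1] [_ H2]. apply NNPP. intro Hne.
  set (e := Rabs (I1 - I2) / 2).
  assert (He : 0 < e) by (unfold e; assert (0 < Rabs (I1 - I2)) by (apply Rabs_pos_lt; lra); lra).
  destruct (H1 e He) as [d1 [Hd1 P1]], (H2 e He) as [d2 [Hd2 P2]].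
  destruct (cousin a b (fun x => Rmin (d1 x) (d2 x)) Hab) as [n [x [tg [H0 [Hn Hf]]]]].
  { intros x. apply Rmin_pos; auto. }
  destruct (fine_mono _ d1 _ _ _ (fun y => Rmin_l _ _) Hf) as [F1 F1'].
  destruct (fine_mono _ d2 _ _ _ (fun y => Rmin_r _ _) Hf) as [_ F2'].
  specialize (P1 n x tg H0 Hn F1 F1'). specialize (P2 n x tg H0 Hn F1 F2').
  set (sm := rsum (fun i => h (tg i) * (x (S i) - x i)) n) in *.
  assert (Rabs (I1 - I2) <= Rabs (sm - I1) + Rabs (sm - I2)).
  { replace (I1 - I2) with (- (sm - I1) + (sm - I2)) by ring.
    eapply Rle_trans; [apply Rabs_triang|]. rewrite Rabs_Ropp. lra. }
  unfold e in *. lra.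
Qed.

Lemma gint_unique h a b I : is_gauge_integral h a b I -> gint h a b = I.
Proof.
  intros H. apply (gauge_integral_unique h a b); auto.
  apply (epsilon_spec (inhabits 0) (fun I => is_gauge_integral h a b I)). exists I; auto.
Qed.

Definition indicator (E : R -> Prop) (x : R) : R :=
  if excluded_middle_informative (E x) then 1 else 0.

Lemma indicator_cases E x : (E x /\ indicator E x = 1) \/ (~ E x /\ indicator E x = 0).
Proof. unfold indicator. destruct excluded_middle_informative; auto. Qed.

Lemma null_set_empty : null_set (fun _ => False).
Proof.
  intros eps Heps. exists (fun _ => 0), (fun _ => 0).
  split; [intros; lra|]. split; [intros x []|].
  intros N. rewrite rsum_eq0 by (intros; ring). lra.
Qed.

(* [Rmax 0 (Rmin b (x p) - a)] is the length of the part of [a, b] swept so far. *)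
Lemma selected_length_le_interval p (x c : nat -> R) a b :
  (forall i, (i < p)%nat -> x i <= x (S i)) ->
  (forall i, (i < p)%nat -> c i = 0 \/ (c i = 1 /\ a <= x i /\ x (S i) <= b)) ->
  rsum (fun i => c i * (x (S i) - x i)) p <= Rmax 0 (Rmin b (x p) - a).
Proof.
  induction p as [|p IH]; intros Hm Hc; simpl.
  - unfold Rmax; destruct Rle_dec; lra.
  - specialize (IH (fun i Hi => Hm i ltac:(lia)) (fun i Hi => Hc i ltac:(lia))).
    specialize (Hm p ltac:(lia)).
    destruct (Hc p ltac:(lia)) as [-> | [-> [Ha Hb]]];
      revert IH; unfold Rmax, Rmin; repeat destruct Rle_dec; lra.
Qed.

Lemma selected_length_le_cover N p (x c A B : nat -> R) (nn : nat -> nat) :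
  (forall n, A n <= B n) ->
  (forall i, (i < p)%nat -> x i <= x (S i)) ->
  (forall i, (i < p)%nat -> c i = 0 \/
      (c i = 1 /\ (nn i < N)%nat /\ A (nn i) <= x i /\ x (S i) <= B (nn i))) ->
  rsum (fun i => c i * (x (S i) - x i)) p <= rsum (fun n => B n - A n) N.
Proof.
  revert c. induction N as [|N IH]; intros c HAB Hm Hc.
  - rewrite rsum_eq0; simpl; [lra|].
    intros i Hi. destruct (Hc i Hi) as [->|[_ [? _]]]; [ring|lia].
  - set (cN := fun i => if Nat.eqb (nn i) N then c i else 0).
    set (cO := fun i => if Nat.eqb (nn i) N then 0 else c i).
    rewrite (rsum_ext _ (fun i => cN i * (x (S i) - x i) + cO i * (x (S i) - x i)))
      by (intros i _; unfold cN, cO; destruct (Nat.eqb (nn i) N); ring).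
    rewrite rsum_plus. simpl.
    assert (rsum (fun i => cN i * (x (S i) - x i)) p <= B N - A N).
    { eapply Rle_trans; [apply (selected_length_le_interval p x cN (A N) (B N)); auto|].
      - intros i Hi. unfold cN. destruct (Nat.eqb_spec (nn i) N); [|auto].
        destruct (Hc i Hi) as [Hci|[Hci [_ ?]]]; subst N; auto.
      - specialize (HAB N). unfold Rmax, Rmin; repeat destruct Rle_dec; lra. }
    assert (rsum (fun i => cO i * (x (S i) - x i)) p <= rsum (fun n => B n - A n) N).
    { apply IH; auto. intros i Hi. unfold cO. destruct (Nat.eqb_spec (nn i) N); [auto|].
      destruct (Hc i Hi) as [Hci|[Hci [? [? ?]]]]; auto. right. repeat split; auto; lia. }
    lra.
Qed.

(* Each selected subinterval lies in one of the covering intervals of [E]. *)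
Lemma null_set_gauge E eps : null_set E -> 0 < eps ->
  exists d, (forall x, 0 < d x) /\
  forall n (x tg c : nat -> R),
    (forall i, (i < n)%nat -> x i <= x (S i)) ->
    (forall i, (i < n)%nat -> c i = 0 \/
       (c i = 1 /\ E (tg i) /\ tg i - d (tg i) < x i /\ x (S i) < tg i + d (tg i))) ->
    rsum (fun i => c i * (x (S i) - x i)) n <= eps.
Proof.
  intros HE Heps. destruct (HE eps Heps) as [A [B [HAB [Hcov Hlen]]]].
  destruct (choice (fun y n => E y -> A n < y < B n)) as [nn Hnn].
  { intro y. destruct (classic (E y)) as [Hy|Hy].
    - destruct (Hcov y Hy) as [n Hn]. exists n; auto.
    - exists O; tauto. }
  destruct (choice (fun y r => 0 < r /\ (E y -> A (nn y) <= y - r /\ y + r <= B (nn y))))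
    as [d Hd].
  { intro y. destruct (classic (E y)) as [Hy|Hy]; [|exists 1; split; [lra|tauto]].
    specialize (Hnn y Hy).
    exists (Rmin (y - A (nn y)) (B (nn y) - y)). split; [apply Rmin_pos; lra|].
    intros _. pose proof (Rmin_l (y - A (nn y)) (B (nn y) - y)).
    pose proof (Rmin_r (y - A (nn y)) (B (nn y) - y)). lra. }
  exists d. split; [apply Hd|]. intros n x tg c Hm Hc.
  destruct (fin_bound (fun i => nn (tg i)) n) as [N HN].
  eapply Rle_trans; [|apply (Hlen N)].
  apply (selected_length_le_cover N n x c A B (fun i => nn (tg i))); auto.
  intros i Hi. destruct (Hc i Hi) as [?|[? [HEi ?]]]; auto.
  destruct (proj2 (Hd (tg i)) HEi). right. repeat split; auto; lra.
Qed.

Lemma rsum_regroup (K : nat -> nat) (u : nat -> R) n Km :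
  (forall i, (i < n)%nat -> (K i < Km)%nat) ->
  rsum (fun i => INR (K i) * u i) n =
  rsum (fun k => INR k * rsum (fun i => if Nat.eqb (K i) k then u i else 0) n) Km.
Proof.
  intros HK. transitivity (rsum (fun i => if Nat.ltb (K i) Km then INR (K i) * u i else 0) n).
  { apply rsum_ext. intros i Hi. specialize (HK i Hi).
    destruct (Nat.ltb_spec (K i) Km); [reflexivity|lia]. }
  clear HK. induction Km as [|Km IH].
  - apply rsum_eq0. intros i _. destruct (Nat.ltb_spec (K i) 0); [lia|reflexivity].
  - simpl. rewrite <- IH, <- rsum_scal, <- rsum_plus. apply rsum_ext. intros i _.
    destruct (Nat.ltb_spec (K i) (S Km)), (Nat.ltb_spec (K i) Km), (Nat.eqb_spec (K i) Km);
      subst; try lia; ring.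
Qed.

Lemma geometric_rsum eps K : rsum (fun k => eps / 2 ^ S k) K = eps - eps / 2 ^ K.
Proof.
  induction K as [|K IH]; [simpl; field|].
  change (rsum ?a (S K)) with (rsum a K + a K). rewrite IH. simpl. field.
  apply pow_nonzero. lra.
Qed.

Lemma level_shares_le eps K : 0 <= eps ->
  rsum (fun k => INR k * (eps / (2 ^ S k * (INR k + 1)))) K <= eps.
Proof.
  intros Heps. apply Rle_trans with (rsum (fun k => eps / 2 ^ S k) K).
  - apply rsum_le. intros k _. pose proof (pos_INR k). pose proof (pow_lt 2 (S k) ltac:(lra)).
    apply (Rmult_le_reg_r (2 ^ S k * (INR k + 1))); [nra|]. field_simplify; nra.
  - rewrite geometric_rsum. pose proof (pow_lt 2 K ltac:(lra)).
    assert (0 <= eps / 2 ^ K) by (apply Rmult_le_pos; [|left; apply Rinv_0_lt_compat]; lra).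
    lra.
Qed.

(* The null set is split into the level sets of an integer bound [K] for [|h|];
   level [k] receives the share [eps / (2^(k+1) (k+1))] of the error. *)
Lemma null_set_weighted_sum E h eps : null_set E -> 0 < eps ->
  exists d, (forall x, 0 < d x) /\ forall n x tg, fine d n x tg ->
    rsum (fun i => indicator E (tg i) * Rabs (h (tg i)) * (x (S i) - x i)) n <= eps.
Proof.
  intros HE Heps.
  set (ek := fun k : nat => eps / (2 ^ S k * (INR k + 1))).
  assert (Hek : forall k, 0 < ek k).
  { intro k. apply Rdiv_lt_0_compat; auto. apply Rmult_lt_0_compat.
    - apply pow_lt; lra.
    - pose proof (pos_INR k); lra. }
  destruct (choice _ (fun k => null_set_gauge E (ek k) HE (Hek k))) as [dk Hdk].
  destruct (choice (fun y k => Rabs (h y) <= INR k)) as [K HK].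
  { intro y. destruct (INR_unbounded (Rabs (h y))) as [k Hk]. exists k; lra. }
  exists (fun y => dk (K y) y). split; [intro y; apply Hdk|].
  intros n x tg Hf. destruct Hf as [F1 F2].
  assert (Hm : forall i, (i < n)%nat -> 0 <= x (S i) - x i) by (intros i Hi; specialize (F1 i Hi); lra).
  set (u := fun i => indicator E (tg i) * (x (S i) - x i)).
  assert (Hlevel : forall k, rsum (fun i => if Nat.eqb (K (tg i)) k then u i else 0) n <= ek k).
  { intro k. unfold u.
    rewrite (rsum_ext _ (fun i => (if Nat.eqb (K (tg i)) k then indicator E (tg i) else 0)
                                  * (x (S i) - x i)))
      by (intros i _; destruct Nat.eqb; ring).
    apply (proj2 (Hdk k) n x tg); [intros i Hi; specialize (Hm i Hi); lra|].
    intros i Hi. destruct (Nat.eqb_spec (K (tg i)) k); [subst k|auto].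
    destruct (indicator_cases E (tg i)) as [[? ->]|[_ ->]]; auto. }
  destruct (fin_bound (fun i => K (tg i)) n) as [Km HKm].
  apply Rle_trans with (rsum (fun i => INR (K (tg i)) * u i) n).
  { apply rsum_le. intros i Hi. unfold u. specialize (Hm i Hi). specialize (HK (tg i)).
    destruct (indicator_cases E (tg i)) as [[_ ->]|[_ ->]]; nra. }
  rewrite (rsum_regroup (fun i => K (tg i)) u n Km HKm).
  apply Rle_trans with (rsum (fun k => INR k * ek k) Km); [|apply level_shares_le; lra].
  apply rsum_le. intros k _. apply Rmult_le_compat_l; [apply pos_INR|apply Hlevel].
Qed.

Lemma straddle F x l e : derivable_pt_lim F x l -> 0 < e ->
  exists d, 0 < d /\ forall u v, x - d < u <= x -> x <= v < x + d ->
    Rabs (l * (v - u) - (F v - F u)) <= e * (v - u).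
Proof.
  intros H He. destruct (H e He) as [[d Hd] Hlim]. exists d. split; [exact Hd|].
  assert (Hz : forall z, Rabs (z - x) < d -> Rabs (F z - F x - l * (z - x)) <= e * Rabs (z - x)).
  { intros z Hz. destruct (Req_dec z x) as [->|Hne].
    - rewrite !Rminus_diag, Rmult_0_r, Rminus_0_r, !Rabs_R0. lra.
    - specialize (Hlim (z - x) ltac:(lra) Hz). replace (x + (z - x)) with z in Hlim by ring.
      replace (F z - F x - l * (z - x)) with ((z - x) * ((F z - F x) / (z - x) - l))
        by (field; lra).
      rewrite Rabs_mult, Rmult_comm. apply Rmult_le_compat_r; [apply Rabs_pos|lra]. }
  intros u v Hu Hv.
  pose proof (Hz u ltac:(apply Rabs_def1; lra)) as Hu'.
  pose proof (Hz v ltac:(apply Rabs_def1; lra)) as Hv'.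
  rewrite (Rabs_left1 (u - x)) in Hu' by lra. rewrite (Rabs_right (v - x)) in Hv' by lra.
  replace (l * (v - u) - (F v - F u))
    with (- (F v - F x - l * (v - x)) + (F u - F x - l * (u - x))) by ring.
  eapply Rle_trans; [apply Rabs_triang|]. rewrite Rabs_Ropp. lra.
Qed.

(* Off [E] the straddle lemma applies; the tags in [E] are controlled by the last
   hypothesis. *)
Lemma ftc_gauge_ae F h E a b : a <= b -> null_set E ->
  (forall x, ~ E x -> derivable_pt_lim F x (h x)) ->
  (forall eps, 0 < eps -> exists d, (forall x, 0 < d x) /\
     forall n x tg, x O = a -> x n = b -> fine d n x tg ->
       rsum (fun i => indicator E (tg i) * Rabs (F (x (S i)) - F (x i))) n <= eps) ->
  is_gauge_integral h a b (F b - F a).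
Proof.
  intros Hab HE Hder HF. split; auto. intros eps Heps.
  set (e := eps / (4 * (b - a + 1))).
  assert (He : 0 < e) by (apply Rdiv_lt_0_compat; lra).
  destruct (choice (fun y r => 0 < r /\ (~ E y -> forall u v, y - r < u <= y -> y <= v < y + r ->
      Rabs (h y * (v - u) - (F v - F u)) <= e * (v - u)))) as [dD HdD].
  { intro y. destruct (classic (E y)) as [Hy|Hy]; [exists 1; split; [lra|tauto]|].
    destruct (straddle F y (h y) e (Hder y Hy) He) as [r [Hr Hr']]. exists r; auto. }
  destruct (null_set_weighted_sum E h (eps / 4) HE ltac:(lra)) as [dN [HdN PN]].
  destruct (HF (eps / 4) ltac:(lra)) as [dF [HdF PF]].
  exists (fun y => Rmin (dD y) (Rmin (dN y) (dF y))). split.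
  { intro y. apply Rmin_pos; [apply HdD|apply Rmin_pos; auto]. }
  intros n x tg H0 Hn F1 F2.
  assert (Hf : fine (fun y => Rmin (dD y) (Rmin (dN y) (dF y))) n x tg) by (split; auto).
  specialize (PN n x tg (fine_mono _ _ _ _ _
    (fun y => Rle_trans _ _ _ (Rmin_r _ _) (Rmin_l _ _)) Hf)).
  specialize (PF n x tg H0 Hn (fine_mono _ _ _ _ _
    (fun y => Rle_trans _ _ _ (Rmin_r _ _) (Rmin_r _ _)) Hf)).
  rewrite <- H0, <- Hn, <- (rsum_telescope (fun i => F (x i))), <- rsum_minus.
  eapply Rle_lt_trans; [apply Rabs_rsum_le|].
  eapply Rle_lt_trans; [apply (rsum_le _ (fun i => e * (x (S i) - x i) +
      (indicator E (tg i) * Rabs (h (tg i)) * (x (S i) - x i)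
       + indicator E (tg i) * Rabs (F (x (S i)) - F (x i)))))|].
  { intros i Hi. specialize (F1 i Hi). specialize (F2 i Hi).
    destruct (indicator_cases E (tg i)) as [[_ ->]|[HnE ->]].
    - unfold Rminus at 1. eapply Rle_trans; [apply Rabs_triang|].
      rewrite Rabs_Ropp, Rabs_mult, (Rabs_right (x (S i) - x i)) by lra. nra.
    - pose proof (Rmin_l (dD (tg i)) (Rmin (dN (tg i)) (dF (tg i)))).
      pose proof (proj2 (HdD (tg i)) HnE (x i) (x (S i)) ltac:(lra) ltac:(lra)). lra. }
  rewrite !rsum_plus, rsum_scal, rsum_telescope, H0, Hn.
  assert (e * (b - a) < eps / 4).
  { unfold e. apply (Rmult_lt_reg_r (4 * (b - a + 1))); [lra|]. field_simplify; lra. }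
  lra.
Qed.

Lemma ftc_gauge_derivable F h a b : a <= b -> (forall x, derivable_pt_lim F x (h x)) ->
  is_gauge_integral h a b (F b - F a).
Proof.
  intros Hab Hder. apply (ftc_gauge_ae F h (fun _ => False)); auto using null_set_empty.
  intros eps Heps. exists (fun _ => 1). split; [intros; lra|].
  intros n x tg _ _ _. rewrite rsum_eq0; [lra|].
  intros i _. destruct (indicator_cases (fun _ => False) (tg i)) as [[[] _]|[_ ->]]. ring.
Qed.

Lemma ftc_gauge_AC F h E a b : a <= b -> null_set E -> AC_loc F ->
  (forall x, ~ E x -> derivable_pt_lim F x (h x)) ->
  is_gauge_integral h a b (F b - F a).
Proof.
  intros Hab HE HAC Hder. apply (ftc_gauge_ae F h E); auto.
  intros eps Heps. destruct (HAC a b Hab eps Heps) as [eta [Heta Peta]].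
  destruct (null_set_weighted_sum E (fun _ => 1) (eta / 2) HE ltac:(lra)) as [d [Hd Pd]].
  exists d. split; auto. intros n x tg H0 Hn Hf. left.
  assert (Hm : forall i, (i < n)%nat -> x i <= x (S i)).
  { intros i Hi. apply (fine_increasing d n x tg Hf); lia. }
  (* Collapsing the intervals whose tag is not in [E] leaves a family of total
     length below [eta], to which absolute continuity applies. *)
  set (bb := fun i => x i + indicator E (tg i) * (x (S i) - x i)).
  rewrite (rsum_ext _ (fun i => Rabs (F (bb i) - F (x i)))).
  2:{ intros i _. unfold bb. destruct (indicator_cases E (tg i)) as [[_ ->]|[_ ->]].
      - replace (x i + 1 * (x (S i) - x i)) with (x (S i)) by ring. ring.
      - replace (x i + 0 * (x (S i) - x i)) with (x i) by ring.
        rewrite Rminus_diag, Rabs_R0. ring. }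
  apply Peta.
  - intros i Hi. pose proof (fine_increasing d n x tg Hf O i ltac:(lia)).
    pose proof (fine_increasing d n x tg Hf (S i) n ltac:(lia)). specialize (Hm i Hi).
    unfold bb. destruct (indicator_cases E (tg i)) as [[_ ->]|[_ ->]]; lra.
  - intros i Hi. specialize (Hm i ltac:(lia)). unfold bb.
    destruct (indicator_cases E (tg i)) as [[_ ->]|[_ ->]]; lra.
  - specialize (Pd n x tg Hf). unfold bb.
    rewrite (rsum_ext _ (fun i => indicator E (tg i) * Rabs 1 * (x (S i) - x i)))
      by (intros; rewrite Rabs_R1; ring).
    lra.
Qed.

Lemma derivable_pt_lim_affine G G' al be v : (forall x, derivable_pt_lim G x (G' x)) ->
  derivable_pt_lim (fun y => G (al * y + be)) v (G' (al * v + be) * al).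
Proof.
  intros H. apply (derivable_pt_lim_comp (fun y => al * y + be) G v al); [|apply H].
  apply (derivable_pt_lim_ext (mult_real_fct al id + fct_cte be)%F); [reflexivity|].
  replace al with (al * 1 + 0) at 2 by ring.
  apply derivable_pt_lim_plus; [apply derivable_pt_lim_scal, derivable_pt_lim_id|].
  apply derivable_pt_lim_const.
Qed.

Lemma derivable_pt_lim_rsum (G : nat -> R -> R) (G' : nat -> R) x n :
  (forall i, derivable_pt_lim (G i) x (G' i)) ->
  derivable_pt_lim (fun y => rsum (fun i => G i y) n) x (rsum G' n).
Proof.
  intros H. induction n as [|n IH]; simpl.
  - apply (derivable_pt_lim_ext (fct_cte 0)); [reflexivity|apply derivable_pt_lim_const].
  - apply (derivable_pt_lim_ext ((fun y => rsum (fun i => G i y) n) + G n)%F); [reflexivity|].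
    apply derivable_pt_lim_plus; auto.
Qed.

Lemma Un_cv_bounded_mult_0 a b B : (forall n, Rabs (a n) <= B) -> Un_cv b 0 ->
  Un_cv (fun n => a n * b n) 0.
Proof.
  intros Ha Hb e He. pose proof (Rabs_pos B).
  destruct (Hb (e / (Rabs B + 1))) as [N HN]; [apply Rdiv_lt_0_compat; lra|].
  exists N. intros n Hn. specialize (HN n Hn). unfold R_dist in *. rewrite Rminus_0_r in *.
  rewrite Rabs_mult. specialize (Ha n). pose proof (Rle_abs B). pose proof (Rabs_pos (b n)).
  apply Rle_lt_trans with ((Rabs B + 1) * Rabs (b n)); [apply Rmult_le_compat_r; lra|].
  apply (Rmult_lt_reg_r (/ (Rabs B + 1))); [apply Rinv_0_lt_compat; lra|].
  replace ((Rabs B + 1) * Rabs (b n) * / (Rabs B + 1)) with (Rabs (b n)) by (field; lra).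
  exact HN.
Qed.

Lemma Un_cv_dist_le u l c eps N0 : Un_cv u l ->
  (forall p, (N0 <= p)%nat -> Rabs (u p - c) < eps) -> Rabs (l - c) <= eps.
Proof.
  intros Hu H. apply Rnot_lt_le. intro Hlt.
  destruct (Hu (Rabs (l - c) - eps)) as [N HN]; [lra|].
  specialize (HN (Nat.max N N0) ltac:(lia)). specialize (H (Nat.max N N0) ltac:(lia)).
  unfold R_dist in HN. set (v := u (Nat.max N N0)) in *.
  assert (Rabs (l - c) <= Rabs (v - l) + Rabs (v - c)); [|lra].
  replace (l - c) with (- (v - l) + (v - c)) by ring.
  eapply Rle_trans; [apply Rabs_triang|]. rewrite Rabs_Ropp. lra.
Qed.

Lemma BV_bounded f : BV f -> exists B, forall x, Rabs (f x) <= B.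
Proof.
  intros [M HM]. exists (Rabs (f 0) + M). intro x.
  assert (Rabs (f x - f 0) <= M).
  { destruct (Rle_lt_dec x 0) as [Hx|Hx].
    - pose proof (HM 1%nat (fun i => match i with O => x | _ => 0 end)) as H.
      destruct Hx as [Hx| ->].
      + rewrite Rabs_minus_sym. simpl in H. rewrite Rplus_0_l in H.
        apply H. intros i Hi. replace i with O by lia. exact Hx.
      + rewrite Rminus_diag, Rabs_R0. specialize (HM O (fun _ => 0) ltac:(lia)). exact HM.
    - pose proof (HM 1%nat (fun i => match i with O => 0 | _ => x end)) as H.
      simpl in H. rewrite Rplus_0_l in H.
      apply H. intros i Hi. replace i with O by lia. exact Hx. }
  replace (f x) with (f 0 + (f x - f 0)) by ring.
  eapply Rle_trans; [apply Rabs_triang|lra].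
Qed.

Section Antiderivative.
Import Coquelicot.Coquelicot.

Lemma continuous_antiderivative chi : continuity chi ->
  exists Phi : R -> R, forall x, derivable_pt_lim Phi x (chi x).
Proof.
  intros Hc. exists (RInt chi 0). intro x.
  assert (Hcx : forall z, continuous chi z) by (intro z; apply continuity_pt_filterlim, Hc).
  apply is_derive_Reals, (is_derive_RInt chi _ 0); [|apply Hcx].
  apply filter_forall. intro b.
  apply (@RInt_correct R_CompleteNormedModule), (@ex_RInt_continuous R_CompleteNormedModule).
  intros z _. apply Hcx.
Qed.

End Antiderivative.

Definition kernel_partial (chi : R -> R) (c : Z -> R) (N : nat) (u : R) : R :=
  zpart (fun k => c k * chi (u - IZR k)) N.

Definition kernel_series (chi : R -> R) (c : Z -> R) (u : R) : R :=
  zsum (fun k => c k * chi (u - IZR k)).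

Lemma derivable_pt_lim_kernel_partial Phi chi c N u :
  (forall x, derivable_pt_lim Phi x (chi x)) ->
  derivable_pt_lim (kernel_partial Phi c N) u (kernel_partial chi c N u).
Proof.
  intros H. apply (derivable_pt_lim_rsum (fun i y => c (Z.of_nat i - Z.of_nat N)%Z
      * Phi (y - IZR (Z.of_nat i - Z.of_nat N)))).
  intro i. set (k := (Z.of_nat i - Z.of_nat N)%Z).
  apply (derivable_pt_lim_ext (mult_real_fct (c k) (fun y => Phi (1 * y + - IZR k))));
    [intro y; unfold mult_real_fct; do 2 f_equal; ring|].
  replace (c k * chi (u - IZR k)) with (c k * (chi (1 * u + - IZR k) * 1))
    by (rewrite Rmult_1_r; do 2 f_equal; ring).
  apply derivable_pt_lim_scal, derivable_pt_lim_affine, H.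
Qed.

Lemma chi2_tails chi : chi2 chi -> forall y,
  Un_cv (fun N => chi (y - INR N)) 0 /\ Un_cv (fun N => chi (y + INR N + 1)) 0.
Proof.
  intros [_ HU] y.
  assert (Hs : forall e, 0 < e -> exists N0, forall N, (N0 <= N)%nat ->
     Rabs (chi (y - (INR N + 1))) + Rabs (chi (y + (INR N + 1))) < e).
  { intros e He. destruct (HU y y e He) as [N0 HN0]. exists N0. intros N HN.
    specialize (HN0 (S N) N y ltac:(lia) HN ltac:(lra)).
    rewrite zpart_S, opp_IZR, <- INR_IZR_INZ, S_INR in HN0.
    replace (y - - (INR N + 1)) with (y + (INR N + 1)) in HN0 by ring.
    pose proof (Rabs_pos (chi (y - (INR N + 1)))). pose proof (Rabs_pos (chi (y + (INR N + 1)))).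
    match type of HN0 with Rabs ?A < _ =>
      replace A with (Rabs (chi (y - (INR N + 1))) + Rabs (chi (y + (INR N + 1)))) in HN0 by ring
    end.
    rewrite Rabs_right in HN0; lra. }
  split; intros e He; destruct (Hs e He) as [N0 HN0].
  - exists (S N0). intros [|N] HN; [lia|]. specialize (HN0 N ltac:(lia)).
    unfold R_dist. rewrite Rminus_0_r, S_INR. pose proof (Rabs_pos (chi (y + (INR N + 1)))). lra.
  - exists N0. intros N HN. specialize (HN0 N HN). unfold R_dist. rewrite Rminus_0_r.
    replace (y + INR N + 1) with (y + (INR N + 1)) by ring.
    pose proof (Rabs_pos (chi (y - (INR N + 1)))). lra.
Qed.

Section KernelSeries.

Variable chi : R -> R.
Hypothesis chi2_chi : chi2 chi.
Variables (c : Z -> R) (B : R).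
Hypothesis c_bounded : forall k, Rabs (c k) <= B.

Lemma kernel_partial_ucauchy a b eps : 0 < eps -> exists N0, forall N1 N2 u,
  (N0 <= N1)%nat -> (N0 <= N2)%nat -> a <= u <= b ->
  Rabs (kernel_partial chi c N1 u - kernel_partial chi c N2 u) < eps.
Proof.
  intros Heps. destruct chi2_chi as [_ HU].
  set (B' := Rabs B + 1). assert (HB' : 0 < B') by (unfold B'; pose proof (Rabs_pos B); lra).
  destruct (HU a b (eps / B')) as [N0 HN0]; [apply Rdiv_lt_0_compat; auto|].
  exists N0.
  assert (Hle : forall N1 N2 u, (N0 <= N1)%nat -> (N1 <= N2)%nat -> a <= u <= b ->
     Rabs (kernel_partial chi c N2 u - kernel_partial chi c N1 u) < eps).
  { intros N1 N2 u H1 H12 Hu. set (s := fun N => zpart (fun k => Rabs (chi (u - IZR k))) N).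
    apply Rle_lt_trans with (B' * (s N2 - s N1)).
    { unfold s. rewrite Rmult_minus_distr_l, <- !zpart_scal. apply Rabs_zpart_sub_le; auto.
      intro k. rewrite Rabs_mult. apply Rmult_le_compat_r; [apply Rabs_pos|].
      specialize (c_bounded k). pose proof (Rle_abs B). unfold B'. lra. }
    specialize (HN0 N2 N1 u ltac:(lia) H1 Hu). fold (s N2) (s N1) in HN0.
    apply Rle_lt_trans with (B' * Rabs (s N2 - s N1)); [apply Rmult_le_compat_l; [lra|apply Rle_abs]|].
    apply (Rmult_lt_reg_r (/ B')); [apply Rinv_0_lt_compat; auto|].
    replace (B' * Rabs (s N2 - s N1) * / B') with (Rabs (s N2 - s N1)) by (field; lra).
    exact HN0. }
  intros N1 N2 u H1 H2 Hu. destruct (Nat.le_ge_cases N1 N2).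
  - rewrite Rabs_minus_sym. apply Hle; auto.
  - apply Hle; auto.
Qed.

Lemma kernel_series_cv u :
  Un_cv (fun N => kernel_partial chi c N u) (kernel_series chi c u).
Proof.
  destruct (R_complete (fun N => kernel_partial chi c N u)) as [l Hl].
  { intros e He. destruct (kernel_partial_ucauchy u u e He) as [N0 HN0].
    exists N0. intros n p Hn Hp. apply HN0; auto; lra. }
  unfold kernel_series. rewrite (zsum_unique _ l Hl). exact Hl.
Qed.

Lemma kernel_partial_cvu a b eps : 0 < eps -> exists N0, forall n u,
  (N0 <= n)%nat -> a <= u <= b ->
  Rabs (kernel_series chi c u - kernel_partial chi c n u) < eps.
Proof.
  intros Heps. destruct (kernel_partial_ucauchy a b (eps / 2)) as [N0 HN0]; [lra|].
  exists N0. intros n u Hn Hu.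
  assert (Rabs (kernel_series chi c u - kernel_partial chi c n u) <= eps / 2); [|lra].
  apply (Un_cv_dist_le _ _ _ _ N0 (kernel_series_cv u)).
  intros p Hp. apply HN0; auto.
Qed.

(* Summation by parts; the boundary terms vanish because [chi] does at infinity. *)
Lemma kernel_series_increment x :
  has_zsum (fun k => (c (k + 1)%Z - c k) * chi (x - IZR k))
    (kernel_series chi c (x + 1) - kernel_series chi c x).
Proof.
  destruct (chi2_tails chi chi2_chi x) as [T1 T2].
  unfold has_zsum.
  apply (Un_cv_ext (fun N => (kernel_partial chi c N (x + 1) - kernel_partial chi c N x)
    + (c (Z.of_nat N + 1)%Z * chi (x - INR N) - c (- Z.of_nat N)%Z * chi (x + INR N + 1)))).
  { intro N. rewrite zpart_by_parts. reflexivity. }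
  replace (kernel_series chi c (x + 1) - kernel_series chi c x)
    with (kernel_series chi c (x + 1) - kernel_series chi c x + (0 - 0)) by ring.
  apply CV_plus; [apply CV_minus; apply kernel_series_cv|].
  apply CV_minus; apply (Un_cv_bounded_mult_0 _ _ B); auto.
Qed.

End KernelSeries.

Lemma Un_cv_scal r u l : Un_cv u l -> Un_cv (fun n => r * u n) (r * l).
Proof.
  intros Hu. apply (CV_mult (fun _ => r)); auto.
  intros e He. exists O. intros. unfold R_dist. rewrite Rminus_diag, Rabs_R0. exact He.
Qed.

Lemma increments_cauchy (G G' : nat -> R -> R) a b : a < b ->
  (forall N x, derivable_pt_lim (G N) x (G' N x)) ->
  (forall eps, 0 < eps -> exists N0, forall N1 N2 x, (N0 <= N1)%nat -> (N0 <= N2)%nat ->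
     a <= x <= b -> Rabs (G' N1 x - G' N2 x) < eps) ->
  Cauchy_crit (fun N => G N b - G N a).
Proof.
  intros Hab HG HC eps Heps.
  destruct (HC (eps / (b - a))) as [N0 HN0]; [apply Rdiv_lt_0_compat; lra|].
  exists N0. intros N1 N2 H1 H2. unfold R_dist.
  destruct (MVT_cor2 (fun v => G N1 v - G N2 v) (fun v => G' N1 v - G' N2 v) a b Hab)
    as [xi [Hxi Hab']].
  { intros v _. apply derivable_pt_lim_minus; apply HG. }
  replace (G N1 b - G N1 a - (G N2 b - G N2 a)) with ((G' N1 xi - G' N2 xi) * (b - a))
    by (rewrite <- Hxi; ring).
  rewrite Rabs_mult, (Rabs_right (b - a)) by lra.
  specialize (HN0 N1 N2 xi H1 H2 ltac:(lra)).
  apply (Rmult_lt_compat_r (b - a)) in HN0; [|lra].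
  replace (eps / (b - a) * (b - a)) with eps in HN0 by (field; lra). exact HN0.
Qed.

Lemma CVU_affine_difference (G : nat -> R -> R) Ginf k al be1 be2 t r :
  (forall a b eps, 0 < eps -> exists N0, forall n u, (N0 <= n)%nat -> a <= u <= b ->
     Rabs (Ginf u - G n u) < eps) ->
  CVU (fun n y => k * (G n (al * y + be1) - G n (al * y + be2)))
      (fun y => k * (Ginf (al * y + be1) - Ginf (al * y + be2))) t r.
Proof.
  intros HG eps Heps.
  set (rad := Rabs al * r + Rabs be1 + Rabs be2).
  set (eps' := eps / (2 * (Rabs k + 1))).
  assert (Heps' : 0 < eps') by (apply Rdiv_lt_0_compat; [|pose proof (Rabs_pos k)]; lra).
  destruct (HG (al * t - rad) (al * t + rad) eps' Heps') as [N0 HN0].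
  exists N0. intros n y Hn Hy. unfold Boule in Hy.
  assert (Hin : forall be, Rabs be <= Rabs be1 + Rabs be2 ->
    al * t - rad <= al * y + be <= al * t + rad).
  { intros be Hbe. assert (Rabs (al * y + be - al * t) <= rad);
      [|pose proof (Rle_abs (al * y + be - al * t)); pose proof (Rle_abs (-(al * y + be - al * t))); rewrite Rabs_Ropp in *; lra].
    replace (al * y + be - al * t) with (al * (y - t) + be) by ring.
    eapply Rle_trans; [apply Rabs_triang|]. rewrite Rabs_mult.
    pose proof (Rabs_pos al). pose proof (Rabs_pos (y - t)).
    assert (Rabs al * Rabs (y - t) <= Rabs al * r) by (apply Rmult_le_compat_l; lra).
    unfold rad. lra. }
  pose proof (Rabs_pos be1). pose proof (Rabs_pos be2).
  pose proof (HN0 n (al * y + be1) Hn (Hin be1 ltac:(lra))).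
  pose proof (HN0 n (al * y + be2) Hn (Hin be2 ltac:(lra))).
  rewrite <- Rmult_minus_distr_l, Rabs_mult.
  apply Rle_lt_trans with (Rabs k * (2 * eps')).
  - apply Rmult_le_compat_l; [apply Rabs_pos|].
    set (p := Ginf (al * y + be1) - G n (al * y + be1)) in *.
    set (q := Ginf (al * y + be2) - G n (al * y + be2)) in *.
    replace (Ginf (al * y + be1) - Ginf (al * y + be2)
             - (G n (al * y + be1) - G n (al * y + be2))) with (p - q) by (unfold p, q; ring).
    unfold Rminus at 1. eapply Rle_trans; [apply Rabs_triang|]. rewrite Rabs_Ropp. lra.
  - unfold eps'. pose proof (Rabs_pos k).
    apply (Rmult_lt_reg_r (Rabs k + 1)); [lra|]. field_simplify; nra.
Qed.

Lemma chibar_antiderivative chi Phi m u : (forall x, derivable_pt_lim Phi x (chi x)) ->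
  chibar chi m u = / INR m * (Phi (u + INR m / 2) - Phi (u - INR m / 2)).
Proof.
  intros HPhi. unfold chibar. f_equal.
  replace (u - INR m / 2) with (u + - INR m / 2) by field.
  apply gint_unique, (ftc_gauge_derivable (fun v => Phi (u + v))).
  - pose proof (pos_INR m). lra.
  - intro v. apply (derivable_pt_lim_ext (fun y => Phi (1 * y + u))); [intro y; f_equal; ring|].
    replace (chi (u + v)) with (chi (1 * v + u) * 1) by (rewrite Rmult_1_r; f_equal; ring).
    apply derivable_pt_lim_affine, HPhi.
Qed.

Section SbarDerivative.

Variables (chi Phi f : R -> R) (B w : R) (m : nat).
Hypothesis chi2_chi : chi2 chi.
Hypothesis Phi_chi : forall x, derivable_pt_lim Phi x (chi x).
Hypothesis f_bounded : forall x, Rabs (f x) <= B.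
Hypothesis m_pos : (1 <= m)%nat.

Let c k := f (IZR k / w).

Let c_bounded k : Rabs (c k) <= B.
Proof. apply f_bounded. Qed.

Let m_gt0 : 0 < INR m.
Proof. apply lt_0_INR. lia. Qed.

Lemma Sbar_partial_eq N y :
  zpart (fun k => f (IZR k / w) * chibar chi m (w * y - IZR k)) N =
  / INR m * (kernel_partial Phi c N (w * y + INR m / 2)
             - kernel_partial Phi c N (w * y - INR m / 2)).
Proof.
  unfold kernel_partial. rewrite <- zpart_minus, <- zpart_scal. apply zpart_ext. intro k.
  rewrite (chibar_antiderivative chi Phi) by exact Phi_chi. unfold c.
  replace (w * y - IZR k + INR m / 2) with (w * y + INR m / 2 - IZR k) by ring.
  replace (w * y - IZR k - INR m / 2) with (w * y - INR m / 2 - IZR k) by ring.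
  ring.
Qed.

Lemma Sbar_partial_cv y :
  Un_cv (fun N => zpart (fun k => f (IZR k / w) * chibar chi m (w * y - IZR k)) N)
        (Sbar chi m w f y).
Proof.
  destruct (R_complete (fun N => kernel_partial Phi c N (w * y + INR m / 2)
                                 - kernel_partial Phi c N (w * y - INR m / 2))) as [l Hl].
  { apply increments_cauchy with (G' := kernel_partial chi c); [lra| |].
    - intros N x. apply derivable_pt_lim_kernel_partial, Phi_chi.
    - intros eps Heps. apply (kernel_partial_ucauchy chi chi2_chi c B c_bounded _ _ eps Heps). }
  apply (Un_cv_scal (/ INR m)) in Hl.
  apply (Un_cv_ext _ _ (fun N => eq_sym (Sbar_partial_eq N y))) in Hl.
  unfold Sbar. rewrite (zsum_unique _ _ Hl). exact Hl.
Qed.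

Lemma Sbar_derivative t :
  derivable_pt_lim (Sbar chi m w f) t
    (/ INR m * w * (kernel_series chi c (w * t + INR m / 2)
                    - kernel_series chi c (w * t - INR m / 2))).
Proof.
  set (fn := fun N y => zpart (fun k => f (IZR k / w) * chibar chi m (w * y - IZR k)) N).
  set (fn' := fun N y => / INR m * w * (kernel_partial chi c N (w * y + INR m / 2)
                                        - kernel_partial chi c N (w * y + - (INR m / 2)))).
  set (g' := fun y => / INR m * w * (kernel_series chi c (w * y + INR m / 2)
                                     - kernel_series chi c (w * y + - (INR m / 2)))).
  set (r := mkposreal 1 Rlt_0_1).
  apply (CVU_derivable fn fn' (Sbar chi m w f) g' t r).
  - apply CVU_affine_difference. intros a b eps Heps.
    apply (kernel_partial_cvu chi chi2_chi c B c_bounded a b eps Heps).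
  - intros y _. apply Sbar_partial_cv.
  - intros N y _. unfold fn, fn'.
    apply (derivable_pt_lim_ext _ _ _ _ (fun z => eq_sym (Sbar_partial_eq N z))).
    replace (/ INR m * w * (kernel_partial chi c N (w * y + INR m / 2)
                            - kernel_partial chi c N (w * y + - (INR m / 2))))
      with (/ INR m * (kernel_partial chi c N (w * y + INR m / 2) * w
                       - kernel_partial chi c N (w * y + - (INR m / 2)) * w)) by ring.
    apply (derivable_pt_lim_ext (mult_real_fct (/ INR m)
      ((fun z => kernel_partial Phi c N (w * z + INR m / 2))
       - (fun z => kernel_partial Phi c N (w * z + - (INR m / 2))))%F)); [reflexivity|].
    apply derivable_pt_lim_scal, derivable_pt_lim_minus;
      apply derivable_pt_lim_affine; intro x; apply derivable_pt_lim_kernel_partial, Phi_chi.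
  - apply Boule_center.
Qed.

End SbarDerivative.

Lemma Kw_kernel_series chi f g B w s :
  chi2 chi -> (forall x, Rabs (f x) <= B) -> AC_loc f -> ae_derivative f g -> 0 < w ->
  Kw chi w g s = w * (kernel_series chi (fun k => f (IZR k / w)) (w * s + 1)
                      - kernel_series chi (fun k => f (IZR k / w)) (w * s)).
Proof.
  intros H2 HB HAC [E [HE Hder]] Hw.
  set (c := fun k => f (IZR k / w)).
  assert (Hcell : forall k, gint g (IZR k / w) ((IZR k + 1) / w) = c (k + 1)%Z - c k).
  { intro k. unfold c. rewrite plus_IZR. apply gint_unique, (ftc_gauge_AC f g E); auto.
    unfold Rdiv. apply Rmult_le_compat_r; [left; apply Rinv_0_lt_compat|]; lra. }
  unfold Kw. apply zsum_unique.
  apply (Un_cv_ext (fun N => w * zpart (fun k => (c (k + 1)%Z - c k) * chi (w * s - IZR k)) N)).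
  { intro N. rewrite <- zpart_scal. apply zpart_ext. intro k. rewrite Hcell. ring. }
  apply Un_cv_scal, (kernel_series_increment chi H2 c B (fun k => HB _)).
Qed.

Theorem proposition3p2 (chi f g : R -> R) :
  chi1 chi -> chi2 chi -> AC f -> ae_derivative f g ->
  forall (w : R) (m : nat) (t : R), 0 < w -> (1 <= m)%nat ->
  derivable_pt_lim (Sbar chi m w f) t
    (/ INR m * rsum (fun j => Kw chi w g (t - (INR m - 2 * INR j) / (2 * w))) m).
Proof.
  intros [Hcont _] H2 [HBV HAC] Hder w m t Hw Hm.
  destruct (continuous_antiderivative chi Hcont) as [Phi HPhi].
  destruct (BV_bounded f HBV) as [B HB].
  set (L := kernel_series chi (fun k => f (IZR k / w))).
  set (x0 := w * t - INR m / 2).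
  rewrite (rsum_ext _ (fun j => w * (L (x0 + INR (S j)) - L (x0 + INR j)))).
  2:{ intros j _. rewrite (Kw_kernel_series chi f g B) by assumption. rewrite S_INR.
      replace (w * (t - (INR m - 2 * INR j) / (2 * w))) with (x0 + INR j)
        by (unfold x0; field; lra).
      unfold L. do 3 f_equal. ring. }
  rewrite rsum_scal, (rsum_telescope (fun j => L (x0 + INR j))), Rplus_0_r.
  replace (x0 + INR m) with (w * t + INR m / 2) by (unfold x0; field).
  rewrite <- Rmult_assoc. exact (Sbar_derivative chi Phi f B w m H2 HPhi HB Hm t).
Qed.
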